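(* Let $I=\langle K,f,f',s,t,P\rangle$ be an instance of \textsc{Sub-STS} where $K=(V,E)$ is a complete graph, $P\subseteq V$, $f(s)=f'(t)=0$, $f(v)\neq 0$ for all $v\neq s$, and $f'(v)\neq 0$ for all $v\neq t$, and where $f$ and $f'$ color the same number of vertices with each color. Let $R=\{v\in V\mid f(v)\neq f'(v)\}\cup\{s,t\}\cup P$, and let $D$ be the directed multigraph (self-loops and parallel edges allowed) with vertex set $\{f(v)\mid v\in R\}$ and edge multiset $\{(f(v),f'(v))\mid v\in R\}$ (one edge per $v\in R$). Let $\mathrm{cc}(D)$ be the number of connected components of $D$. Then $\lambda(I)\ge |R|+\mathrm{cc}(D)-2$.
   Context: Colorings are arbitrary maps from $V$ to a set of colors. A swapping sequence of length $p-1$ from $f$ to $f'$ is a sequence $\langle f_1,\dots,f_p\rangle$ of colorings with $f_1=f$, $f_p=f'$, together with a walk $\langle w_1,\dots,w_p\rangle$ such that for $2\le i\le p$, $f_i$ is obtained from $f_{i-1}$ by swapping the colors of $w_{i-1}$ and $w_i$ (other vertices unchanged). For an instance $I=\langle G,f,f',s,t,P\rangle$ of \textsc{Sub-STS}, $\lambda(I)$ is the minimum length of a swapping sequence from $f$ to $f'$ whose walk $\langle w_1,\dots,w_m\rangle$ satisfies $w_1=s$, $w_m=t$ and $P\subseteq\{w_1,\dots,w_m\}$, and $\infty$ if none exists. *)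

From mathcomp Require Import all_boot.
Set Implicit Arguments. Unset Strict Implicit. Unset Printing Implicit Defensive.

Section Defs.
Variables (V C : finType).

Definition complete_adj : rel V := fun u w => u != w.

Definition swap_col (g : V -> C) (u w : V) : V -> C :=
  fun x => if x == u then g w else if x == w then g u else g x.

(* <fs, ws> is a swapping sequence in the graph with adjacency adj from f to f':
   fs = <f_1..f_p>, ws = <w_1..w_p> a walk, f_1 = f, f_p = f',
   f_i obtained from f_{i-1} by swapping the colors of w_{i-1} and w_i. *)
Definition swapping_seq (adj : rel V) (f f' : V -> C)
    (fs : seq (V -> C)) (ws : seq V) : Prop :=
  match ws with
  | [::] => False
  | w0 :: _ =>
    [/\ size fs = size ws, nth f fs 0 = f, last f fs = f' &
      forall i, (0 < i < size ws)%N ->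
        adj (nth w0 ws i.-1) (nth w0 ws i)
        /\ nth f fs i = swap_col (nth f fs i.-1) (nth w0 ws i.-1) (nth w0 ws i)]
  end.

(* feasible solutions of a Sub-STS instance <G,f,f',s,t,P>: swapping sequences
   whose walk starts at s, ends at t and visits every vertex of P.
   The length of such a sequence is (size ws).-1; lambda(I) is the minimum
   length over feasible solutions (infinity if none). *)
Definition substs_feasible (adj : rel V) (f f' : V -> C) (s t : V) (P : {set V})
    (fs : seq (V -> C)) (ws : seq V) : Prop :=
  [/\ swapping_seq adj f f' fs ws, head s ws = s, last s ws = t &
      {subset P <= ws}].

Definition Rset (f f' : V -> C) (s t : V) (P : {set V}) : {set V} :=
  [set v | f v != f' v] :|: [set s; t] :|: P.

(* the directed multigraph D on colors: vertex set f(R), one edge (f v, f' v)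
   per v in R.  Connected components are those of the underlying undirected
   multigraph (weak connectivity). *)
Definition D_vertices (f f' : V -> C) (R : {set V}) : {set C} := f @: R.
Definition D_adj (f f' : V -> C) (R : {set V}) : rel C :=
  fun c d => [exists v in R, ((f v == c) && (f' v == d)) || ((f v == d) && (f' v == c))].
Definition D_cc (f f' : V -> C) (R : {set V}) : nat :=
  #| [set [set d in D_vertices f f' R | connect (D_adj f f' R) c d]
        | c in D_vertices f f' R] |.
End Defs.

(* For a colouring g, a current position b and a set Q of vertices still to be
   visited, let R = {v | g v <> f' v} u {b, t} u Q and let the potential be
   |R| + cc(D(R)), D(R) the colour multigraph of (g, f') on R.  Swapping the
   colours of b and w lowers the potential by at most one.  Let E be D(R) plus
   an edge between the colours g b and g w: every edge of the new multigraph
   D(R') is joined by a path of E and every colour of R is E-connected to one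
   of R', so cc(D(R')) is at least the number of components of E.  If b stays
   in R', then |R| does not drop and the extra edge merges at most two
   components; if b leaves R', then g w = f' b, so the extra edge is already
   connected in D(R) and only |R| drops, by one.  Along a feasible walk the
   potential thus falls from |R| + cc(D(R)) to 2 (R = {t}, one colour). *)

From mathcomp Require Import all_boot.
Set Implicit Arguments. Unset Strict Implicit. Unset Printing Implicit Defensive.

Lemma leq_imset_card_fibers (T U W : finType) (S : {set T}) (F : T -> U) (G : T -> W) :
  {in S &, forall x y, F x = F y -> G x = G y} -> #|G @: S| <= #|F @: S|.
Proof.
move=> FG; have [->|[x0 _]] := set_0Vmem S; first by rewrite !imset0 !cards0.
pose rep u := odflt x0 [pick x in S | F x == u].
have GrepF : {in S, forall x, G x = (G \o rep) (F x)}.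
  move=> x xS; rewrite /rep /=; case: pickP => [y /andP[yS /eqP Fy]|/(_ x)].
    by rewrite (FG x y).
  by rewrite xS eqxx.
by rewrite (eq_in_imset GrepF) imset_comp leq_imset_card.
Qed.

Section Components.
Variable T : finType.
Implicit Types (r : rel T) (S : {set T}).

Definition component r x : {set T} := [set y | connect r x y].
Definition ncomp r S := #|component r @: S|.

Lemma eq_component r x y : symmetric r ->
  (component r x == component r y) = connect r x y.
Proof.
move=> rsym; apply/eqP/idP => [rxy|cxy].
  have : y \in component r y by rewrite inE connect0.
  by rewrite -rxy inE.
have cyx : connect r y x by rewrite (sym_connect_sym rsym).
apply/setP => z; rewrite !inE; apply/idP/idP; exact: connect_trans.
Qed.

Lemma ncomp_sub r1 r2 S : symmetric r1 -> symmetric r2 ->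
  subrel r1 (connect r2) -> ncomp r2 S <= ncomp r1 S.
Proof.
move=> r1sym r2sym r12; rewrite /ncomp; apply: leq_imset_card_fibers => x y _ _ /eqP.
rewrite eq_component // => /(connect_sub r12) cxy.
by apply/eqP; rewrite eq_component.
Qed.

Lemma ncomp_cover r S1 S2 : symmetric r ->
  {in S2, forall x, exists2 y, y \in S1 & connect r x y} -> ncomp r S2 <= ncomp r S1.
Proof.
move=> rsym cover; rewrite /ncomp; apply/subset_leq_card/subsetP => _ /imsetP[x xS2 ->].
have [y yS1 cxy] := cover x xS2.
by apply/imsetP; exists y => //; apply/eqP; rewrite eq_component.
Qed.

Definition add_edge r a b : rel T :=
  fun u v => [|| r u v, (u == a) && (v == b) | (u == b) && (v == a)].

Lemma add_edge_sym r a b : symmetric r -> symmetric (add_edge r a b).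
Proof.
move=> rsym u v; rewrite /add_edge rsym (andbC (v == a)) (andbC (v == b)).
by rewrite [in RHS]orbA orbAC orbA.
Qed.

Lemma connect_add_edge r a b x y : symmetric r ->
  connect (add_edge r a b) x y -> [|| connect r x y, connect r x a | connect r x b].
Proof.
move=> rsym cxy; apply: contraTT isT; rewrite !negb_or => /and3P[nxy nxa nxb].
have closed_x : closed (add_edge r a b) (component r x).
  move=> u v /or3P[ruv|/andP[/eqP-> /eqP->]|/andP[/eqP-> /eqP->]]; rewrite !inE.
  - apply/idP/idP => [cxu|cxv]; first exact: connect_trans cxu (connect1 ruv).
    by apply: connect_trans cxv (connect1 _); rewrite rsym.
  - by rewrite (negbTE nxa) (negbTE nxb).
  - by rewrite (negbTE nxa) (negbTE nxb).
by have := closed_connect closed_x cxy; rewrite !inE connect0 (negbTE nxy).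
Qed.

Lemma ncomp_add_edge r a b S : symmetric r ->
  ncomp r S <= ncomp (add_edge r a b) S + ~~ connect r a b.
Proof.
move=> rsym; have rcsym := sym_connect_sym rsym.
have rasym := add_edge_sym a b rsym.
have [cab|ncab] := boolP (connect r a b).
  rewrite addn0; apply: ncomp_sub => // u v.
  by case/or3P=> [/connect1 //|/andP[/eqP-> /eqP->]|/andP[/eqP-> /eqP->]]; rewrite // rcsym.
rewrite addn1; pose S' := [set x in S | ~~ connect r x a].
have split_a : component r @: S \subset component r a |: component r @: S'.
  apply/subsetP => _ /imsetP[x xS ->]; rewrite !inE.
  have [cxa|ncxa] := boolP (connect r x a); first by rewrite eq_component // cxa.
  by apply/orP; right; apply/imsetP; exists x; rewrite // inE xS.
have S'_fibers : #|component r @: S'| <= #|component (add_edge r a b) @: S'|.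
  apply: leq_imset_card_fibers => x y; rewrite !inE => /andP[_ nxa] /andP[_ nya] /eqP.
  rewrite eq_component // => cxy; apply/eqP; rewrite eq_component //.
  move: (connect_add_edge rsym cxy); rewrite (negbTE nxa) /= => /orP[//|cxb].
  rewrite (sym_connect_sym rasym) in cxy.
  move: (connect_add_edge rsym cxy); rewrite (negbTE nya) /= => /orP[|cyb].
    by rewrite rcsym.
  by apply: connect_trans cxb _; rewrite rcsym.
apply: leq_trans (subset_leq_card split_a) _; rewrite cardsU1 -addn1 addnC leq_add ?leq_b1 //.
apply: leq_trans S'_fibers _.
by apply/subset_leq_card/imsetS/subsetP => x; rewrite inE => /andP[].
Qed.

Lemma ncomp_restrict r S : symmetric r ->
  #|[set [set y in S | connect r x y] | x in S]| = ncomp r S.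
Proof.
move=> rsym; apply/eqP; rewrite eqn_leq.
apply/andP; split; apply: leq_imset_card_fibers => x y _ yS.
  move=> /eqP; rewrite eq_component // => cxy.
  by apply/setP => z; rewrite !inE (same_connect (sym_connect_sym rsym) cxy).
move=> Exy; apply/eqP; rewrite eq_component //.
have : y \in [set z in S | connect r y z] by rewrite inE yS connect0.
by rewrite -Exy inE => /andP[].
Qed.

End Components.

Section SwapCol.
Variables (V C : finType) (g : V -> C) (u w : V).

Lemma swap_col_l : swap_col g u w u = g w.
Proof. by rewrite /swap_col eqxx. Qed.

Lemma swap_col_r : swap_col g u w w = g u.
Proof. by rewrite /swap_col eqxx; case: eqP => [->|]. Qed.

Lemma swap_col_other x : x != u -> x != w -> swap_col g u w x = g x.
Proof. by move=> xu xw; rewrite /swap_col (negbTE xu) (negbTE xw). Qed.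

End SwapCol.

Section Potential.
Variables (V C : finType) (f' : V -> C) (t : V).
Implicit Types (g : V -> C) (b v : V) (R Q : {set V}).

Definition potential g b Q : nat :=
  #|Rset g f' b t Q| + D_cc g f' (Rset g f' b t Q).

Lemma D_adj_sym g R : symmetric (D_adj g f' R).
Proof.
by move=> c d; apply/existsP/existsP => -[v /andP[vR e]]; exists v; rewrite vR orbC.
Qed.

Lemma D_cc_ncomp g R : D_cc g f' R = ncomp (D_adj g f' R) (g @: R).
Proof. exact/ncomp_restrict/D_adj_sym. Qed.

Lemma D_adj_sub g R (r : rel C) : symmetric r ->
  (forall v, v \in R -> connect r (g v) (f' v)) -> subrel (D_adj g f' R) (connect r).
Proof.
move=> rsym gf' c d /existsP[v /andP[vR /orP[]/andP[/eqP<- /eqP<-]]]; first exact: gf'.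
by rewrite (sym_connect_sym rsym) gf'.
Qed.

Lemma connect_D_adj_Rset g b Q v :
  connect (D_adj g f' (Rset g f' b t Q)) (g v) (f' v).
Proof.
have [/eqP->|gf'v] := boolP (g v == f' v); first exact: connect0.
by apply/connect1/existsP; exists v; rewrite !inE gf'v !eqxx.
Qed.

Section Swap.
Variables (g : V -> C) (b w : V) (Q : {set V}).

Local Notation g' := (swap_col g b w).
Local Notation R := (Rset g f' b t Q).
Local Notation R' := (Rset g' f' w t (Q :\ w)).
Local Notation E := (add_edge (D_adj g f' R) (g b) (g w)).

Lemma mem_Rset_swap v : v != b -> v \in R -> v \in R'.
Proof.
move=> vb; have [->|vw] := eqVneq v w; first by rewrite !inE eqxx orbT.
by rewrite !inE swap_col_other // (negbTE vb) (negbTE vw).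
Qed.

Lemma card_Rset_swap : #|R| + (b \in R') <= #|R'|.+1.
Proof.
have bR : b \in R by rewrite !inE eqxx orbT.
rewrite (cardsD1 b R) (cardsD1 b R') bR add1n addSn ltnS addnC leq_add2l.
apply/subset_leq_card/subsetP => v; rewrite !in_setD1 => /andP[vb vR].
by rewrite vb mem_Rset_swap.
Qed.

Lemma swap_notin_Rset : b \notin R' -> g w = f' b.
Proof. by rewrite !inE swap_col_l => /norP[/norP[/negbNE/eqP]]. Qed.

Lemma E_sym : symmetric E.
Proof. exact/add_edge_sym/D_adj_sym. Qed.

Lemma connect_E_swap_col v : connect E (g' v) (g v).
Proof.
have cbw : connect E (g b) (g w) by apply: connect1; rewrite /add_edge !eqxx orbT.
have [->|vb] := eqVneq v b; first by rewrite swap_col_l (sym_connect_sym E_sym).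
have [->|vw] := eqVneq v w; first by rewrite swap_col_r.
by rewrite swap_col_other ?connect0.
Qed.

Lemma ncomp_swap : ncomp E (g @: R) <= ncomp (D_adj g' f' R') (g' @: R').
Proof.
apply: (@leq_trans (ncomp E (g' @: R'))).
  apply: ncomp_cover; first exact: E_sym.
  move=> _ /imsetP[v vR ->]; have [->|vb] := eqVneq v b.
    by exists (g' w); [rewrite imset_f // !inE eqxx orbT | rewrite swap_col_r connect0].
  exists (g' v); first by rewrite imset_f // mem_Rset_swap.
  by rewrite (sym_connect_sym E_sym) connect_E_swap_col.
apply: ncomp_sub; [exact: D_adj_sym | exact: E_sym |].
apply: D_adj_sub => [|v _]; first exact: E_sym.
apply: connect_trans (connect_E_swap_col v) _.
apply: connect_sub (connect_D_adj_Rset g b Q v) => c d Dcd.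
by apply: connect1; rewrite /add_edge Dcd.
Qed.

Lemma ncomp_Rset_swap :
  ncomp (D_adj g f' R) (g @: R) <= ncomp E (g @: R) + (b \in R').
Proof.
apply: leq_trans (ncomp_add_edge (g b) (g w) _ (@D_adj_sym g R)) _.
rewrite leq_add2l.
have [_|bR'] := boolP (b \in R'); first exact: leq_b1.
by rewrite (swap_notin_Rset bR') connect_D_adj_Rset.
Qed.

Lemma potential_swap : potential g b Q <= (potential g' w (Q :\ w)).+1.
Proof.
rewrite /potential !D_cc_ncomp -addSn.
apply: leq_trans (leq_add (leqnn _) ncomp_Rset_swap) _.
by rewrite addnA addnAC leq_add ?card_Rset_swap ?ncomp_swap.
Qed.

End Swap.
End Potential.

Lemma setD_rcons (T : finType) (A : {set T}) (s : seq T) x :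
  A :\: [set:: rcons s x] = A :\: [set:: s] :\ x.
Proof. by apply/setP => v; rewrite !inE mem_rcons in_cons negb_or andbA. Qed.

Section Walk.
Variables (V C : finType) (f' : V -> C) (t : V).

Lemma potential_setD1 g b Q : potential f' t g b (Q :\ b) = potential f' t g b Q.
Proof.
have RE : Rset g f' b t (Q :\ b) = Rset g f' b t Q.
  by apply/setP => v; rewrite !inE; case: (eqVneq v b) => _; rewrite ?orbT ?andbT.
by rewrite /potential RE.
Qed.

Lemma potential_final : potential f' t f' t set0 = 2.
Proof.
have Rt : Rset f' f' t t set0 = [set t].
  by apply/setP => v; rewrite !inE eqxx orbb orbF.
by rewrite /potential Rt /D_cc /D_vertices !imset_set1 !cards1.
Qed.

Lemma potential_swapping_seq (adj : rel V) g b P fs ws :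
  swapping_seq adj g f' fs (b :: ws) ->
  potential f' t g b (P :\ b) <=
    potential f' t f' (last b ws) (P :\: [set:: b :: ws]) + size ws.
Proof.
case=> size_fs fs0 fs_last swaps; set W := b :: ws.
have step i : i < size ws ->
  potential f' t (nth g fs i) (nth b W i) (P :\: [set:: take i.+1 W]) <=
  (potential f' t (nth g fs i.+1) (nth b W i.+1) (P :\: [set:: take i.+2 W])).+1.
  move=> lti; have [_ ->] := swaps i.+1 lti.
  by rewrite (take_nth b (lti : i.+1 < size W)) setD_rcons potential_swap.
have walk i : i < (size ws).+1 ->
  potential f' t g b (P :\ b) <=
  potential f' t (nth g fs i) (nth b W i) (P :\: [set:: take i.+1 W]) + i.
  elim: i => [_|i IH lti]; first by rewrite addn0 fs0 /= take0 set_cons set_nil setU0.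
  by rewrite addnS -addSn (leq_trans (IH (ltnW lti))) // leq_add2r step.
have := walk _ (leqnn (size ws).+1).
have fs_end : nth g fs (size ws) = f' by rewrite -fs_last -nth_last size_fs.
by rewrite fs_end (nth_last b W) (@take_oversize _ (size ws).+1 W).
Qed.

End Walk.

Theorem lemma5 (V C : finType) (c0 : C) (f f' : V -> C) (s t : V) (P : {set V}) :
  f s = c0 -> f' t = c0 ->
  (forall v, v != s -> f v != c0) ->
  (forall v, v != t -> f' v != c0) ->
  (forall c : C, #|[set v | f v == c]| = #|[set v | f' v == c]|) ->
  forall (fs : seq (V -> C)) (ws : seq V),
    substs_feasible (@complete_adj V) f f' s t P fs ws ->
    (#|Rset f f' s t P| + D_cc f f' (Rset f f' s t P) - 2 <= (size ws).-1)%N.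
Proof.
move=> _ _ _ _ _ fs [|b ws] [fs_seq /= b_s ws_last P_visited] //; subst b.
have P_done : P :\: [set:: s :: ws] = set0.
  apply/setP => v; rewrite in_set0 in_setD andbC.
  by case: (boolP (v \in P)) => //= /P_visited; rewrite inE => ->.
have := potential_swapping_seq t P fs_seq.
by rewrite potential_setD1 ws_last P_done potential_final leq_subLR.
Qed.
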